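(* Let $(\lambda_k),(x_k),(y_k)$ be generated by the acceleration framework (context) up to $K$ for convex differentiable $g$ with minimizer $x^*$, $g^*=g(x^* )$, and suppose $\delta\le c\sqrt{1-\sigma}\,\|x^*\|/A_K$ for some $c\ge0$. Then $\delta_k\le c(1+3c)\|x^*\|^2$ for all $k\in[K]$, where $\delta_k=\delta\sum_{i\in[k]}a_i\|x_i-x^*\|+\frac{\delta^2}{2(1-\sigma)}\sum_{i\in[k]}a_i^2$. Consequently, if $c\le\frac14$ then for all $k\in[K]$, \[ A_k[g(y_k)-g^*]+\frac12\|x_k-x^*\|^2+\sum_{i\in[k]}\frac{(1-\sigma)A_i}{2\lambda_i}\|y_i-\tilde x_{i-1}\|^2\le\|x^*\|^2. \] In particular, if $\delta\le\frac{\|x^*\|}{\mu A_K}$ with $\mu=\frac{4\sqrt2}{\sqrt{1-\sigma}}$, then $\|x_k-x^*\|\le2\|x^*\|$ for all $k\in[K]$, and for every $\epsilon>0$ either $g(y_k)\le g^*+\epsilon$ or $A_k\le\|x^*\|^2/\epsilon$.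
   Context: Acceleration framework: let $g:\mathbb{R}^d\to\mathbb{R}$ be convex and differentiable, $\sigma\in(0,1)$, $\delta\ge0$, $K\ge1$. Sequences $(\lambda_k)_{k=1}^K\subset(0,\infty)$ and $(x_k)_{k=0}^K,(y_k)_{k=0}^K\subset\mathbb{R}^d$ are generated by the framework if $x_0=y_0=0$, $A_0=0$, and for each $k=0,\dots,K-1$, with $a_{k+1}=\frac12\big[\lambda_{k+1}+\sqrt{\lambda_{k+1}^2+4\lambda_{k+1}A_k}\big]$, $A_{k+1}=A_k+a_{k+1}$, $\tilde x_k=\frac{A_k}{A_{k+1}}y_k+\frac{a_{k+1}}{A_{k+1}}x_k$, one has $\|\lambda_{k+1}\nabla g(y_{k+1})+y_{k+1}-\tilde x_k\|\le\sigma\|y_{k+1}-\tilde x_k\|+\lambda_{k+1}\delta$ and $\|x_{k+1}-(x_k-a_{k+1}\nabla g(y_{k+1}))\|\le a_{k+1}\delta$. (Note $\lambda_{k+1}A_{k+1}=a_{k+1}^2$.) *)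

From mathcomp Require Import ssreflect ssrfun ssrbool eqtype ssrnat seq fintype bigop.
From Stdlib Require Import Reals.
Open Scope R_scope.

Definition vec (d : nat) := 'I_d -> R.

Definition vzero {d} : vec d := fun _ => 0.
Definition vadd {d} (u v : vec d) : vec d := fun i => u i + v i.
Definition vsub {d} (u v : vec d) : vec d := fun i => u i - v i.
Definition vscale {d} (t : R) (u : vec d) : vec d := fun i => t * u i.

Definition dot {d} (u v : vec d) : R := \big[Rplus/0]_(i < d) (u i * v i).
Definition vnorm {d} (u : vec d) : R := sqrt (dot u u).

Definition convex {d} (g : vec d -> R) : Prop :=
  forall (u v : vec d) (t : R), 0 <= t -> t <= 1 ->
    g (vadd (vscale t u) (vscale (1 - t) v)) <= t * g u + (1 - t) * g v.

Definition is_gradient {d} (g : vec d -> R) (G : vec d -> vec d) : Prop :=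
  forall x : vec d, forall eps : R, 0 < eps -> exists eta : R, 0 < eta /\
    forall h : vec d, vnorm h < eta ->
      Rabs (g (vadd x h) - g x - dot (G x) h) <= eps * vnorm h.

Fixpoint sum1 (f : nat -> R) (k : nat) : R :=
  match k with
  | O => 0
  | S k' => sum1 f k' + f (S k')
  end.

(* a_{k+1} and A_k of the acceleration framework; lam k = lambda_k (k >= 1). *)
Fixpoint accA (lam : nat -> R) (k : nat) : R :=
  match k with
  | O => 0
  | S k' => accA lam k' +
      (lam (S k') + sqrt (lam (S k') ^ 2 + 4 * lam (S k') * accA lam k')) / 2
  end.

Definition acca (lam : nat -> R) (k : nat) : R :=
  match k with
  | O => 0
  | S k' => (lam (S k') + sqrt (lam (S k') ^ 2 + 4 * lam (S k') * accA lam k')) / 2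
  end.

Definition xtilde {d} (lam : nat -> R) (x y : nat -> vec d) (k : nat) : vec d :=
  vadd (vscale (accA lam k / accA lam (S k)) (y k))
       (vscale (acca lam (S k) / accA lam (S k)) (x k)).

Definition generated {d} (g : vec d -> R) (G : vec d -> vec d)
    (sigma delta : R) (K : nat) (lam : nat -> R) (x y : nat -> vec d) : Prop :=
  0 < sigma /\ sigma < 1 /\ 0 <= delta /\ (1 <= K)%nat /\
  (forall k, (1 <= k <= K)%nat -> 0 < lam k) /\
  x O = vzero /\ y O = vzero /\
  (forall k, (k < K)%nat ->
     vnorm (vadd (vscale (lam (S k)) (G (y (S k))))
                 (vsub (y (S k)) (xtilde lam x y k)))
       <= sigma * vnorm (vsub (y (S k)) (xtilde lam x y k)) + lam (S k) * delta /\
     vnorm (vsub (x (S k)) (vsub (x k) (vscale (acca lam (S k)) (G (y (S k))))))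
       <= acca lam (S k) * delta).

Definition delta_k {d} (sigma delta : R) (lam : nat -> R) (x : nat -> vec d)
    (xs : vec d) (k : nat) : R :=
  delta * sum1 (fun i => acca lam i * vnorm (vsub (x i) xs)) k
  + delta ^ 2 / (2 * (1 - sigma)) * sum1 (fun i => acca lam i ^ 2) k.

From mathcomp Require Import ssreflect ssrfun ssrbool eqtype ssrnat seq fintype bigop.
From mathcomp Require Import zify.
From Stdlib Require Import Reals Lra Psatz FunctionalExtensionality.
Open Scope R_scope.

(* After the Euclidean facts needed about R^d (bilinearity,
   Cauchy-Schwarz) and the first-order characterization of convexity
   (gradient_inequality), one iteration of the framework is analysed by
   combining three inequalities: convexity at y_{k+1} against y_k and x*,
   the inexact mirror step for x_{k+1}, and the relative-error condition of
   the hybrid proximal step (one_step_descent).  Telescoping gives that the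
   potential A_k (g(y_k) - min g) + ||x_k - x*||^2/2 + residuals is at most
   ||x*||^2/2 + delta_k (potential_bound), so ||x_k - x*||^2 <= ||x*||^2 +
   2 delta_k.  Since delta_k is itself linear in the distances, a bootstrap
   on k (dist_bound) keeps every x_k within (1 + 5c/2)||x*|| of x*, which
   yields delta_k <= c (1 + 3c) ||x*||^2 and, for c <= 1/4, a potential at
   most ||x*||^2.  The theorem follows with c = 1/(4 sqrt 2). *)

Lemma nonneg_quadratic_discriminant (a b c : R) :
  0 <= c -> (forall t, 0 <= a - 2 * b * t + c * t ^ 2) -> b ^ 2 <= a * c.
Proof.
move=> c_ge0 nonneg.
case: (Rle_lt_or_eq_dec _ _ c_ge0) => [c_pos | c_eq0].
- have := nonneg (b / c).
  have -> : a - 2 * b * (b / c) + c * (b / c) ^ 2 = (a * c - b ^ 2) / c by field; lra.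
  move=> at_vertex; have := Rmult_le_pos _ _ at_vertex (Rlt_le _ _ c_pos).
  have -> : (a * c - b ^ 2) / c * c = a * c - b ^ 2 by field; lra.
  lra.
- subst c; case: (Req_dec b 0) => [-> | b_neq0]; first lra.
  have := nonneg ((a + 1) / (2 * b)).
  have -> : 2 * b * ((a + 1) / (2 * b)) = a + 1 by field.
  lra.
Qed.

Lemma le_of_le_eps (b c n : R) :
  0 <= n -> (forall eps, 0 < eps -> b - eps * n <= c) -> b <= c.
Proof.
move=> n_ge0 near; case: (Rle_lt_dec b c) => // gap.
have := near ((b - c) / (2 * (n + 1))) ltac:(apply: Rdiv_lt_0_compat; lra).
have : (b - c) / (2 * (n + 1)) * n <= (b - c) / 2.
  have -> : (b - c) / (2 * (n + 1)) * n = (b - c) / 2 * (n / (n + 1)) by field; lra.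
  have : n / (n + 1) <= 1.
    apply/(Rmult_le_reg_r (n + 1)); first lra.
    have -> : n / (n + 1) * (n + 1) = n by field; lra.
    lra.
  have : 0 <= n / (n + 1) by apply: Rmult_le_pos; [lra | apply: Rlt_le; apply: Rinv_0_lt_compat; lra].
  nra.
lra.
Qed.

Lemma quadratic_majorant (r B al be : R) :
  be <= B -> al + 2 * be * B <= B ^ 2 -> r ^ 2 <= al + 2 * be * r -> r <= B.
Proof.
move=> be_le_B B_maj r_quad; case: (Rle_lt_dec r B) => // B_lt_r.
have : 0 < (r - B) * (r + B - 2 * be) by apply: Rmult_lt_0_compat; lra.
nra.
Qed.

Section Vectors.
Context {d : nat}.
Implicit Types u v w : vec d.

Lemma vec_ext u v : (forall i, u i = v i) -> u = v.
Proof. exact: functional_extensionality. Qed.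

Lemma sum_lin (al be : R) (f h : 'I_d -> R) :
  \big[Rplus/0]_(i < d) (al * f i + be * h i) =
  al * \big[Rplus/0]_(i < d) f i + be * \big[Rplus/0]_(i < d) h i.
Proof.
apply: (big_rec3 (fun a b c => a = al * b + be * c)) => [|i a b c _ ->]; ring.
Qed.

Lemma dot_sym u v : dot u v = dot v u.
Proof. by apply: eq_bigr => i _; rewrite Rmult_comm. Qed.

Lemma dot_lin_l al be u v w :
  dot (vadd (vscale al u) (vscale be v)) w = al * dot u w + be * dot v w.
Proof. by rewrite /dot -sum_lin; apply: eq_bigr => i _; rewrite /vadd /vscale; ring. Qed.

Lemma dot_vadd_l u v w : dot (vadd u v) w = dot u w + dot v w.
Proof.
have -> : vadd u v = vadd (vscale 1 u) (vscale 1 v)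
  by apply: vec_ext => i; rewrite /vadd /vscale; ring.
by rewrite dot_lin_l; ring.
Qed.

Lemma dot_vsub_l u v w : dot (vsub u v) w = dot u w - dot v w.
Proof.
have -> : vsub u v = vadd (vscale 1 u) (vscale (-1) v)
  by apply: vec_ext => i; rewrite /vsub /vadd /vscale; ring.
by rewrite dot_lin_l; ring.
Qed.

Lemma dot_vscale_l t u w : dot (vscale t u) w = t * dot u w.
Proof.
have -> : vscale t u = vadd (vscale t u) (vscale 0 u)
  by apply: vec_ext => i; rewrite /vadd /vscale; ring.
by rewrite dot_lin_l; ring.
Qed.

Lemma dot_vadd_r u v w : dot w (vadd u v) = dot w u + dot w v.
Proof. by rewrite dot_sym dot_vadd_l !(dot_sym w). Qed.

Lemma dot_vsub_r u v w : dot w (vsub u v) = dot w u - dot w v.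
Proof. by rewrite dot_sym dot_vsub_l !(dot_sym w). Qed.

Lemma dot_vscale_r t u w : dot w (vscale t u) = t * dot w u.
Proof. by rewrite dot_sym dot_vscale_l (dot_sym w). Qed.

(* Bilinear expansion; the vsub rules come first since vsub unfolds to vadd. *)
Definition dotE :=
  (dot_vsub_l, dot_vsub_r, dot_vadd_l, dot_vadd_r, dot_vscale_l, dot_vscale_r).

Lemma dot_ge0 u : 0 <= dot u u.
Proof.
apply: (big_rec (fun a => 0 <= a)) => [|i a _ a_ge0]; first lra.
have := Rle_0_sqr (u i); rewrite /Rsqr; lra.
Qed.

Lemma vnorm_ge0 u : 0 <= vnorm u.
Proof. exact: sqrt_pos. Qed.

Lemma vnorm_sq u : vnorm u ^ 2 = dot u u.
Proof. exact/pow2_sqrt/dot_ge0. Qed.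

Lemma vnorm_scale t u : vnorm (vscale t u) = Rabs t * vnorm u.
Proof.
rewrite /vnorm dot_vscale_l dot_vscale_r -Rmult_assoc sqrt_mult.
- by rewrite -sqrt_Rsqr_abs.
- have := Rle_0_sqr t; rewrite /Rsqr; lra.
- exact: dot_ge0.
Qed.

Lemma cauchy_schwarz u v : dot u v <= vnorm u * vnorm v.
Proof.
have disc : dot u v ^ 2 <= dot u u * dot v v.
  apply: nonneg_quadratic_discriminant; first exact: dot_ge0.
  move=> t; have := dot_ge0 (vsub u (vscale t v)).
  rewrite !dotE (dot_sym v u); lra.
rewrite /vnorm -(sqrt_mult _ _ (dot_ge0 u) (dot_ge0 v)).
apply: Rle_trans (Rle_abs _) _.
rewrite -(sqrt_pow2 (Rabs (dot u v)) (Rabs_pos _)) pow2_abs.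
exact: sqrt_le_1_alt.
Qed.

End Vectors.

Section Convexity.
Context {d : nat} {g : vec d -> R} {G : vec d -> vec d}.

Lemma convex_chord (u w : vec d) (t : R) : convex g -> 0 <= t <= 1 ->
  g (vadd w (vscale t (vsub u w))) - g w <= t * (g u - g w).
Proof.
move=> g_cvx [t_ge0 t_le1].
have -> : vadd w (vscale t (vsub u w)) = vadd (vscale t u) (vscale (1 - t) w)
  by apply: vec_ext => i; rewrite /vadd /vscale /vsub; ring.
have := g_cvx u w t t_ge0 t_le1; lra.
Qed.

Lemma gradient_first_order (w h : vec d) (eps : R) : is_gradient g G -> 0 < eps ->
  exists t, 0 < t <= 1 /\
    t * (dot (G w) h - eps * vnorm h) <= g (vadd w (vscale t h)) - g w.
Proof.
move=> g_grad eps_pos; have [eta [eta_pos taylor]] := g_grad w eps eps_pos.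
have h_ge0 := vnorm_ge0 h.
set t := Rmin 1 (eta / (vnorm h + 1)).
have t_pos : 0 < t by apply: Rmin_pos; [lra | apply: Rdiv_lt_0_compat; lra].
have t_le1 : t <= 1 by apply: Rmin_l.
have th_small : t * vnorm h < eta.
  have : t * (vnorm h + 1) <= eta.
    apply/(Rle_trans _ (eta / (vnorm h + 1) * (vnorm h + 1))).
    - apply: Rmult_le_compat_r; [lra | exact: Rmin_r].
    - apply: Req_le; field; lra.
  lra.
exists t; split; first lra.
have := taylor (vscale t h).
rewrite vnorm_scale dot_vscale_r Rabs_pos_eq; last lra.
move=> /(_ th_small); rewrite -Rabs_Ropp.
move/(Rle_trans _ _ _ (Rle_abs _)); lra.
Qed.

Lemma gradient_inequality : convex g -> is_gradient g G ->
  forall u w : vec d, g w + dot (G w) (vsub u w) <= g u.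
Proof.
move=> g_cvx g_grad u w.
suff : dot (G w) (vsub u w) <= g u - g w by lra.
apply: (le_of_le_eps _ _ (vnorm (vsub u w))); first exact: vnorm_ge0.
move=> eps eps_pos.
have [t [[t_pos t_le1] lower]] := gradient_first_order w (vsub u w) eps g_grad eps_pos.
have upper := convex_chord u w t g_cvx (conj (Rlt_le _ _ t_pos) t_le1).
apply: (Rmult_le_reg_l t) => //; lra.
Qed.

End Convexity.

Definition average {d} (A a : R) (y x : vec d) : vec d :=
  vadd (vscale (A / (A + a)) y) (vscale (a / (A + a)) x).

Section OneStep.
Context {d : nat}.
Implicit Types (u v x y : vec d).

Lemma averaged_convexity_gap (g : vec d -> R) (G : vec d -> vec d)
    (A a : R) x y (y' : vec d) u :
  (forall u w, g w + dot (G w) (vsub u w) <= g u) -> 0 <= A -> 0 < a ->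
  (A + a) * g y' - A * g y - a * g u
    <= (A + a) * dot (G y') (vsub y' (average A a y x)) + a * dot (G y') (vsub x u).
Proof.
move=> subgrad A_ge0 a_pos.
set xt := average A a y x.
have mix : vadd (vscale A (vsub y y')) (vscale a (vsub u y'))
    = vadd (vscale (- (A + a)) (vsub y' xt)) (vscale (- a) (vsub x u)).
  apply: vec_ext => i; rewrite /xt /average /vadd /vsub /vscale; field; lra.
have mix_dot := congr1 (dot (G y')) mix.
rewrite 2!dot_vadd_r 4!dot_vscale_r in mix_dot.
have := Rmult_le_compat_l _ _ _ A_ge0 (subgrad y y').
have := Rmult_le_compat_l _ _ _ (Rlt_le _ _ a_pos) (subgrad u y').
nra.
Qed.

Lemma inexact_mirror_step v x (x' : vec d) u (a delta : R) :
  vnorm (vsub x' (vsub x (vscale a v))) <= a * delta ->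
  1 / 2 * vnorm (vsub x' u) ^ 2 + a * dot v (vsub x u)
    <= 1 / 2 * vnorm (vsub x u) ^ 2 + delta * (a * vnorm (vsub x' u))
       + a ^ 2 / 2 * vnorm v ^ 2.
Proof.
set q := vsub x' u; set e := vsub x' (vsub x (vscale a v)) => e_small.
have qe_le : dot q e <= vnorm q * (a * delta).
  apply: Rle_trans (cauchy_schwarz q e) _.
  apply: Rmult_le_compat_l e_small; exact: vnorm_ge0.
have -> : vsub x u = vadd (vsub q e) (vscale a v)
  by apply: vec_ext => i; rewrite /q /e /vadd /vsub /vscale; ring.
clearbody q e; have := dot_ge0 e.
rewrite !vnorm_sq !dotE (dot_sym e q) (dot_sym v q) (dot_sym v e); nra.
Qed.

Lemma hpe_error_bound v (p : vec d) (lam sigma delta : R) :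
  0 <= sigma < 1 ->
  vnorm (vadd (vscale lam v) p) <= sigma * vnorm p + lam * delta ->
  2 * lam * dot v p + lam ^ 2 * vnorm v ^ 2
    <= - (1 - sigma) * vnorm p ^ 2 + lam ^ 2 * delta ^ 2 / (1 - sigma).
Proof.
move=> [sigma_ge0 sigma_lt1] rel_err.
have sq_err : vnorm (vadd (vscale lam v) p) ^ 2 <= (sigma * vnorm p + lam * delta) ^ 2.
  apply: pow_incr; split => //; exact: vnorm_ge0.
have completed_square :
    - (1 - sigma) * vnorm p ^ 2 + lam ^ 2 * delta ^ 2 / (1 - sigma)
    = (sigma * vnorm p + lam * delta) ^ 2 - vnorm p ^ 2
      + sigma / (1 - sigma) * (lam * delta - (1 - sigma) * vnorm p) ^ 2
  by field; lra.
have : 0 <= sigma / (1 - sigma) * (lam * delta - (1 - sigma) * vnorm p) ^ 2.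
  apply: Rmult_le_pos; last exact: pow2_ge_0.
  apply: Rmult_le_pos => //; apply/Rlt_le/Rinv_0_lt_compat; lra.
move: sq_err; rewrite completed_square !vnorm_sq !dotE (dot_sym p v); lra.
Qed.

Lemma one_step_descent (g : vec d -> R) (G : vec d -> vec d)
    (sigma delta A a lam : R) x y (x' y' : vec d) u :
  (forall u w, g w + dot (G w) (vsub u w) <= g u) ->
  0 <= sigma < 1 -> 0 <= A -> 0 < a -> 0 < lam -> lam * (A + a) = a ^ 2 ->
  vnorm (vadd (vscale lam (G y')) (vsub y' (average A a y x)))
    <= sigma * vnorm (vsub y' (average A a y x)) + lam * delta ->
  vnorm (vsub x' (vsub x (vscale a (G y')))) <= a * delta ->
  (A + a) * (g y' - g u) + 1 / 2 * vnorm (vsub x' u) ^ 2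
  + (1 - sigma) * (A + a) / (2 * lam) * vnorm (vsub y' (average A a y x)) ^ 2
  <= A * (g y - g u) + 1 / 2 * vnorm (vsub x u) ^ 2
     + delta * (a * vnorm (vsub x' u)) + delta ^ 2 / (2 * (1 - sigma)) * a ^ 2.
Proof.
move=> subgrad sigma_range A_ge0 a_pos lam_pos a_sq hpe_step mirror_step.
set p := vsub y' (average A a y x) in hpe_step *.
have gap := averaged_convexity_gap g G A a x y y' u subgrad A_ge0 a_pos.
have mirror := inexact_mirror_step (G y') x x' u a delta mirror_step.
have hpe := hpe_error_bound (G y') p lam sigma delta sigma_range hpe_step.
have scaled : (A + a) * dot (G y') p + a ^ 2 / 2 * vnorm (G y') ^ 2
    <= - ((1 - sigma) * (A + a) / (2 * lam) * vnorm p ^ 2)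
       + delta ^ 2 / (2 * (1 - sigma)) * a ^ 2.
  have weight_pos : 0 < (A + a) / (2 * lam) by apply: Rdiv_lt_0_compat; lra.
  have := Rmult_le_compat_l _ _ _ (Rlt_le _ _ weight_pos) hpe.
  have -> : (A + a) / (2 * lam) * (2 * lam * dot (G y') p + lam ^ 2 * vnorm (G y') ^ 2)
      = (A + a) * dot (G y') p + a ^ 2 / 2 * vnorm (G y') ^ 2
    by rewrite -a_sq; field; lra.
  have -> : (A + a) / (2 * lam)
        * (- (1 - sigma) * vnorm p ^ 2 + lam ^ 2 * delta ^ 2 / (1 - sigma))
      = - ((1 - sigma) * (A + a) / (2 * lam) * vnorm p ^ 2)
        + delta ^ 2 / (2 * (1 - sigma)) * a ^ 2
    by rewrite -a_sq; field; lra.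
  done.
rewrite -/p in gap; nra.
Qed.

End OneStep.

Lemma sum1_S (f : nat -> R) k : sum1 f k.+1 = sum1 f k + f k.+1.
Proof. by []. Qed.

Lemma sum1_le (f h : nat -> R) k :
  (forall i, (1 <= i <= k)%nat -> f i <= h i) -> sum1 f k <= sum1 h k.
Proof.
elim: k => [|k IH] f_le_h /=; first lra.
have := IH (fun i Hi => f_le_h i ltac:(lia)); have := f_le_h k.+1 ltac:(lia); lra.
Qed.

Lemma sum1_ge0 (f : nat -> R) k :
  (forall i, (1 <= i <= k)%nat -> 0 <= f i) -> 0 <= sum1 f k.
Proof.
elim: k => [|k IH] f_ge0 /=; first lra.
have := IH (fun i Hi => f_ge0 i ltac:(lia)); have := f_ge0 k.+1 ltac:(lia); lra.
Qed.

Lemma sum1_scale (c : R) (f : nat -> R) k : sum1 (fun i => c * f i) k = c * sum1 f k.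
Proof. by elim: k => [|k IH] /=; [ring | rewrite IH; ring]. Qed.

Lemma sum1_acca (lam : nat -> R) k : sum1 (acca lam) k = accA lam k.
Proof. by elim: k => [|k IH] //=; rewrite IH. Qed.

Lemma accA_S (lam : nat -> R) k : accA lam k.+1 = accA lam k + acca lam k.+1.
Proof. by []. Qed.

(* a_{k+1} is the positive root of a^2 = lam_{k+1} (A_k + a), i.e.
   lam_{k+1} A_{k+1} = a_{k+1}^2. *)
Lemma acca_spec (lam : nat -> R) k : 0 < lam k.+1 -> 0 <= accA lam k ->
  0 < acca lam k.+1 /\ lam k.+1 * (accA lam k + acca lam k.+1) = acca lam k.+1 ^ 2.
Proof.
move=> lam_pos A_ge0; rewrite /acca.
have disc_ge0 : 0 <= lam k.+1 ^ 2 + 4 * lam k.+1 * accA lam k by nra.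
have := sqrt_sqrt _ disc_ge0; have := sqrt_pos (lam k.+1 ^ 2 + 4 * lam k.+1 * accA lam k).
split; nra.
Qed.

Section Weights.
Context {lam : nat -> R} {K : nat}.
Hypothesis lam_pos : forall k, (1 <= k <= K)%nat -> 0 < lam k.

Lemma accA_ge0 k : (k <= K)%nat -> 0 <= accA lam k.
Proof.
elim: k => [|k IH] k_le; first by rewrite /=; lra.
have A_ge0 := IH (ltnW k_le).
have [a_pos _] := acca_spec lam k (lam_pos k.+1 ltac:(lia)) A_ge0.
rewrite accA_S; lra.
Qed.

Lemma acca_pos k : (1 <= k <= K)%nat -> 0 < acca lam k.
Proof.
case: k => [|k] k_range; first lia.
exact: (acca_spec lam k (lam_pos k.+1 k_range) (accA_ge0 k ltac:(lia))).1.
Qed.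

Lemma accA_mono k n : (k <= n)%nat -> (n <= K)%nat -> accA lam k <= accA lam n.
Proof.
elim: n => [|n IH] k_le n_le.
- have -> : k = 0%nat by lia.
  exact: Rle_refl.
- case: (leqP k n) => [k_le_n | n_lt_k].
  + have := IH k_le_n (ltnW n_le); have := acca_pos n.+1 ltac:(lia).
    rewrite accA_S; lra.
  + have -> : k = n.+1 by lia.
    exact: Rle_refl.
Qed.

Lemma accA_pos k : (1 <= k <= K)%nat -> 0 < accA lam k.
Proof.
move=> k_range; have := accA_mono 1 k ltac:(lia) ltac:(lia).
have := acca_pos 1 ltac:(lia); rewrite accA_S /=; lra.
Qed.

(* Since the a_i are nonnegative, sum a_i^2 <= (sum a_i)^2 = A_k^2. *)
Lemma sum1_acca_sq_le k : (k <= K)%nat -> sum1 (fun i => acca lam i ^ 2) k <= accA lam k ^ 2.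
Proof.
elim: k => [|k IH] k_le; first by rewrite /=; lra.
have := IH (ltnW k_le); have := accA_ge0 k (ltnW k_le); have := acca_pos k.+1 ltac:(lia).
rewrite sum1_S accA_S; nra.
Qed.

End Weights.

Lemma delta_k_S {d} sigma delta lam (x : nat -> vec d) xs k :
  delta_k sigma delta lam x xs k.+1 = delta_k sigma delta lam x xs k
   + delta * (acca lam k.+1 * vnorm (vsub (x k.+1) xs))
   + delta ^ 2 / (2 * (1 - sigma)) * acca lam k.+1 ^ 2.
Proof. rewrite /delta_k !sum1_S; ring. Qed.

Section Framework.
Context {d : nat} {g : vec d -> R} {G : vec d -> vec d} {sigma delta : R} {K : nat}
  {lam : nat -> R} {x y : nat -> vec d} {xs : vec d}.
Hypothesis subgrad : forall u w, g w + dot (G w) (vsub u w) <= g u.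
Hypothesis xs_min : forall u, g xs <= g u.
Hypothesis gen : generated g G sigma delta K lam x y.

Definition residuals (k : nat) : R :=
  sum1 (fun i => (1 - sigma) * accA lam i / (2 * lam i)
                 * vnorm (vsub (y i) (xtilde lam x y (i - 1)%nat)) ^ 2) k.

Definition potential (k : nat) : R :=
  accA lam k * (g (y k) - g xs) + 1 / 2 * vnorm (vsub (x k) xs) ^ 2 + residuals k.

Lemma gen_lam_pos k : (1 <= k <= K)%nat -> 0 < lam k.
Proof. by case: gen => _ [_ [_ [_ [lam_pos _]]]]; apply: lam_pos. Qed.

Lemma residuals_ge0 k : (k <= K)%nat -> 0 <= residuals k.
Proof.
move=> k_le; apply: sum1_ge0 => i i_range.
have sigma_lt1 : sigma < 1 by case: gen => _ [].
have lam_i := gen_lam_pos i ltac:(lia).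
have A_i := accA_ge0 gen_lam_pos i ltac:(lia).
apply: Rmult_le_pos; last exact: pow2_ge_0.
apply: Rmult_le_pos; first nra.
apply/Rlt_le/Rinv_0_lt_compat; lra.
Qed.

Lemma optimality_gap_ge0 k : (k <= K)%nat -> 0 <= accA lam k * (g (y k) - g xs).
Proof.
move=> k_le; apply: Rmult_le_pos; first exact: accA_ge0 gen_lam_pos k k_le.
have := xs_min (y k); lra.
Qed.

(* Telescoping one_step_descent from x_0 = 0: the potential is bounded by
   ||x*||^2 / 2 plus the accumulated error delta_k. *)
Lemma potential_bound k : (k <= K)%nat ->
  potential k <= 1 / 2 * vnorm xs ^ 2 + delta_k sigma delta lam x xs k.
Proof.
case: gen => sigma_pos [sigma_lt1 [delta_ge0 [_ [_ [x0 [_ steps]]]]]].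
elim: k => [|k IH] k_le.
- rewrite /potential /residuals /delta_k /=.
  have -> : vnorm (vsub (x 0%nat) xs) = vnorm xs.
    rewrite x0 /vnorm; congr sqrt; apply: eq_bigr => i _; rewrite /vsub /vzero; ring.
  lra.
- have A_ge0 := accA_ge0 gen_lam_pos k (ltnW k_le).
  have lam_pos := gen_lam_pos k.+1 ltac:(lia).
  have [a_pos a_sq] := acca_spec lam k lam_pos A_ge0.
  have [hpe_step mirror_step] := steps k k_le.
  have descent := one_step_descent g G sigma delta _ _ _ _ _ _ _ xs subgrad
    (conj (Rlt_le _ _ sigma_pos) sigma_lt1) A_ge0 a_pos lam_pos a_sq hpe_step mirror_step.
  have := IH (ltnW k_le).
  rewrite /average -accA_S -/(xtilde lam x y k) in descent.
  rewrite /potential /residuals sum1_S delta_k_S -/(residuals k).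
  have -> : (k.+1 - 1 = k)%nat by lia.
  lra.
Qed.

(* Dropping the nonnegative terms of the potential. *)
Lemma dist_sq_bound k : (k <= K)%nat ->
  vnorm (vsub (x k) xs) ^ 2 <= vnorm xs ^ 2 + 2 * delta_k sigma delta lam x xs k.
Proof.
move=> k_le; have := potential_bound k k_le.
have := residuals_ge0 k k_le; have := optimality_gap_ge0 k k_le.
rewrite /potential; lra.
Qed.

Lemma weighted_dist_sum_bound k (B : R) : (k <= K)%nat ->
  (forall i, (1 <= i <= k)%nat -> vnorm (vsub (x i) xs) <= B) ->
  sum1 (fun i => acca lam i * vnorm (vsub (x i) xs)) k <= B * accA lam k.
Proof.
move=> k_le dist_le; rewrite -sum1_acca -sum1_scale; apply: sum1_le => i i_range.
have := acca_pos gen_lam_pos i ltac:(lia); have := dist_le i i_range; nra.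
Qed.

Section SmallError.
Context {c : R}.
Hypothesis c_ge0 : 0 <= c.
Hypothesis delta_small : delta * accA lam K <= c * sqrt (1 - sigma) * vnorm xs.

Lemma sqrt_one_sub_sigma : 0 <= sqrt (1 - sigma) <= 1 /\ sqrt (1 - sigma) ^ 2 = 1 - sigma.
Proof.
have [sigma_pos [sigma_lt1 _]] := gen.
split; last by apply: pow2_sqrt; lra.
split; first exact: sqrt_pos.
apply: Rle_trans (sqrt_le_1_alt (1 - sigma) 1 _) (Req_le _ _ sqrt_1); lra.
Qed.

(* delta A_k <= c ||x*|| for every k <= K, since A_k <= A_K and sqrt(1 - sigma) <= 1. *)
Lemma delta_accA_le k : (k <= K)%nat -> delta * accA lam k <= c * vnorm xs.
Proof.
move=> k_le; have [_ [_ [delta_ge0 _]]] := gen.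
have [[_ sqrt_le1] _] := sqrt_one_sub_sigma.
have := accA_mono gen_lam_pos k K k_le (leqnn K).
have := Rmult_le_pos _ _ c_ge0 (vnorm_ge0 xs).
nra.
Qed.

Lemma error_sq_sum_bound k : (k <= K)%nat ->
  delta ^ 2 / (2 * (1 - sigma)) * sum1 (fun i => acca lam i ^ 2) k
    <= c ^ 2 * vnorm xs ^ 2 / 2.
Proof.
move=> k_le; have [_ [sigma_lt1 [delta_ge0 _]]] := gen.
have [[sqrt_ge0 _] sqrt_sq] := sqrt_one_sub_sigma.
have A_k_ge0 := accA_ge0 gen_lam_pos k k_le.
have A_k_le := accA_mono gen_lam_pos k K k_le (leqnn K).
have sq_sum := sum1_acca_sq_le gen_lam_pos k k_le.
have delta_A : (delta * accA lam k) ^ 2 <= c ^ 2 * (1 - sigma) * vnorm xs ^ 2.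
  rewrite -sqrt_sq -!Rpow_mult_distr; apply: pow_incr; split; first nra.
  have := Rmult_le_compat_l _ _ _ delta_ge0 A_k_le; lra.
have : delta ^ 2 * sum1 (fun i => acca lam i ^ 2) k <= c ^ 2 * (1 - sigma) * vnorm xs ^ 2.
  have := pow2_ge_0 delta; nra.
have -> : c ^ 2 * vnorm xs ^ 2 / 2
    = (c ^ 2 * (1 - sigma) * vnorm xs ^ 2) / (2 * (1 - sigma)) by field; lra.
move=> weighted; rewrite /Rdiv Rmult_comm -Rmult_assoc [_ * (delta ^ 2)]Rmult_comm.
apply: Rmult_le_compat_r weighted; apply/Rlt_le/Rinv_0_lt_compat; lra.
Qed.

Definition dist_radius : R := vnorm xs * (1 + 5 / 2 * c).

(* Bootstrapping: if x_1, ..., x_k stay within dist_radius of x*, the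
   quadratic inequality dist_sq_bound forces x_{k+1} to do so as well. *)
Lemma dist_bound k : (1 <= k <= K)%nat -> vnorm (vsub (x k) xs) <= dist_radius.
Proof.
suff all_le : forall n, (n <= K)%nat ->
    forall i, (1 <= i <= n)%nat -> vnorm (vsub (x i) xs) <= dist_radius.
  by move=> k_range; apply: (all_le k) => //; lia.
have X_ge0 := vnorm_ge0 xs.
have radius_ge0 : 0 <= dist_radius by rewrite /dist_radius; nra.
elim=> [|n IH] n_le i i_range; first lia.
case: (leqP i n) => [i_le_n | n_lt_i]; first by apply: IH; lia.
have -> : i = n.+1 by lia.
have [_ [_ [delta_ge0 _]]] := gen.
have prev_sum := weighted_dist_sum_bound n dist_radius (ltnW n_le) (IH (ltnW n_le)).
have sq_sum := error_sq_sum_bound n.+1 n_le.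
have total := delta_accA_le n.+1 n_le.
have A_n_ge0 := accA_ge0 gen_lam_pos n (ltnW n_le).
have a_pos := acca_pos gen_lam_pos n.+1 ltac:(lia).
move: (dist_sq_bound n.+1 n_le) sq_sum total.
rewrite delta_k_S /delta_k sum1_S accA_S.
set r := vnorm (vsub (x n.+1) xs) => r_sq sq_sum total.
apply: (quadratic_majorant r dist_radius
  ((1 + c ^ 2) * vnorm xs ^ 2 + 2 * (delta * accA lam n) * dist_radius)
  (delta * acca lam n.+1)).
- rewrite /dist_radius; nra.
- have : dist_radius ^ 2 - 2 * (c * vnorm xs) * dist_radius - (1 + c ^ 2) * vnorm xs ^ 2
      = vnorm xs ^ 2 * (3 * c + c ^ 2 / 4) by rewrite /dist_radius; field.
  have : 0 <= vnorm xs ^ 2 * (3 * c + c ^ 2 / 4) by apply: Rmult_le_pos; nra.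
  nra.
- nra.
Qed.

Lemma delta_k_bound k : (1 <= k <= K)%nat ->
  delta_k sigma delta lam x xs k <= c * (1 + 3 * c) * vnorm xs ^ 2.
Proof.
move=> k_range; have k_le : (k <= K)%nat by lia.
have [_ [_ [delta_ge0 _]]] := gen.
have dist_sum := weighted_dist_sum_bound k dist_radius k_le (fun i i_range => dist_bound i ltac:(lia)).
have sq_sum := error_sq_sum_bound k k_le.
have total := delta_accA_le k k_le.
have A_k_ge0 := accA_ge0 gen_lam_pos k k_le.
have X_ge0 := vnorm_ge0 xs.
have radius_ge0 : 0 <= dist_radius by rewrite /dist_radius; nra.
have weighted : delta * sum1 (fun i => acca lam i * vnorm (vsub (x i) xs)) k
    <= dist_radius * (c * vnorm xs).
  apply: Rle_trans (Rmult_le_compat_l _ _ _ delta_ge0 dist_sum) _.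
  rewrite -Rmult_assoc [delta * _]Rmult_comm Rmult_assoc.
  exact: Rmult_le_compat_l radius_ge0 total.
rewrite /delta_k; rewrite /dist_radius in weighted; nra.
Qed.

Lemma potential_le_sq : c <= 1 / 4 ->
  forall k, (1 <= k <= K)%nat -> potential k <= vnorm xs ^ 2.
Proof.
move=> c_le k k_range; have := potential_bound k ltac:(lia).
have := delta_k_bound k k_range; have := pow2_ge_0 (vnorm xs).
have : c * (1 + 3 * c) <= 1 / 2 by nra.
nra.
Qed.

Lemma dist_le_twice : c <= 1 / 4 ->
  forall k, (1 <= k <= K)%nat -> vnorm (vsub (x k) xs) <= 2 * vnorm xs.
Proof.
move=> c_le k k_range; have := potential_le_sq c_le k k_range.
have := residuals_ge0 k ltac:(lia); have := optimality_gap_ge0 k ltac:(lia).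
rewrite /potential => gap_ge0 res_ge0 pot_le.
apply: Rsqr_incr_0_var; last by have := vnorm_ge0 xs; lra.
rewrite /Rsqr; nra.
Qed.

Lemma eps_solution : c <= 1 / 4 -> forall k, (1 <= k <= K)%nat ->
  forall eps, 0 < eps -> g (y k) <= g xs + eps \/ accA lam k <= vnorm xs ^ 2 / eps.
Proof.
move=> c_le k k_range eps eps_pos.
case: (Rle_lt_dec (g (y k)) (g xs + eps)) => [|not_solved]; [by left | right].
have := potential_le_sq c_le k k_range; have := residuals_ge0 k ltac:(lia).
have := accA_ge0 gen_lam_pos k ltac:(lia); have := pow2_ge_0 (vnorm (vsub (x k) xs)).
rewrite /potential => dist_ge0 A_ge0 res_ge0 pot_le.
apply: (Rmult_le_reg_r eps) => //.
have -> : vnorm xs ^ 2 / eps * eps = vnorm xs ^ 2 by field; lra.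
nra.
Qed.

End SmallError.

End Framework.

Theorem mainTheorem12 (d : nat) (g : vec d -> R) (G : vec d -> vec d)
    (sigma delta : R) (K : nat) (lam : nat -> R) (x y : nat -> vec d)
    (xs : vec d) :
  convex g -> is_gradient g G ->
  (forall u : vec d, g xs <= g u) ->
  generated g G sigma delta K lam x y ->
  (forall c : R, 0 <= c ->
     delta <= c * sqrt (1 - sigma) * vnorm xs / accA lam K ->
     (forall k, (1 <= k <= K)%nat ->
        delta_k sigma delta lam x xs k <= c * (1 + 3 * c) * vnorm xs ^ 2) /\
     (c <= 1 / 4 ->
      forall k, (1 <= k <= K)%nat ->
        accA lam k * (g (y k) - g xs) + 1 / 2 * vnorm (vsub (x k) xs) ^ 2
        + sum1 (fun i => (1 - sigma) * accA lam i / (2 * lam i)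
                         * vnorm (vsub (y i) (xtilde lam x y (i - 1)%nat)) ^ 2) k
        <= vnorm xs ^ 2)) /\
  (delta <= vnorm xs / (4 * sqrt 2 / sqrt (1 - sigma) * accA lam K) ->
     forall k, (1 <= k <= K)%nat ->
       vnorm (vsub (x k) xs) <= 2 * vnorm xs /\
       (forall eps : R, 0 < eps ->
          g (y k) <= g xs + eps \/ accA lam k <= vnorm xs ^ 2 / eps)).
Proof.
move=> g_cvx g_grad xs_min gen.
have subgrad := gradient_inequality g_cvx g_grad.
have [_ [sigma_lt1 _]] := gen.
have A_K_pos : 0 < accA lam K.
  by apply: (accA_pos (gen_lam_pos gen)); case: gen => _ [_ [_ [K_ge1 _]]]; lia.
have small_error c : delta <= c * sqrt (1 - sigma) * vnorm xs / accA lam K ->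
    delta * accA lam K <= c * sqrt (1 - sigma) * vnorm xs.
  move=> delta_le; apply: Rle_trans (Rmult_le_compat_r _ _ _ (Rlt_le _ _ A_K_pos) delta_le) _.
  by apply: Req_le; field; lra.
split.
- move=> c c_ge0 /small_error delta_small; split.
  + exact (delta_k_bound subgrad xs_min gen c_ge0 delta_small).
  + exact (potential_le_sq subgrad xs_min gen c_ge0 delta_small).
- (* The choice c = 1 / (4 sqrt 2) <= 1/4 of the theorem. *)
  have sqrt2_ge1 : 1 <= sqrt 2
    by apply: Rle_trans (Req_le _ _ (esym sqrt_1)) (sqrt_le_1_alt 1 2 _); lra.
  have sqrt_gap_pos : 0 < sqrt (1 - sigma) by apply: sqrt_lt_R0; lra.
  have c_ge0 : 0 <= / (4 * sqrt 2) by apply/Rlt_le/Rinv_0_lt_compat; lra.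
  have c_le : / (4 * sqrt 2) <= 1 / 4
    by rewrite /Rdiv Rmult_1_l; apply: Rinv_le_contravar; lra.
  move=> delta_le k k_range.
  have delta_small := small_error (/ (4 * sqrt 2)) ltac:(
    apply: Rle_trans delta_le (Req_le _ _ _); field; lra).
  split; first exact (dist_le_twice subgrad xs_min gen c_ge0 delta_small c_le k k_range).
  exact (eps_solution subgrad xs_min gen c_ge0 delta_small c_le k k_range).
Qed.
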